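(* Let $f$ be a probability density on $\mathbb{R}$ which is a scale mixture of normals, let $G$ be an absolutely continuous cumulative distribution function on $\mathbb{R}$ symmetric about $0$, and let $\omega$ be an odd function with $\omega(x)>0$ for $x>0$. Let $\mathbf{x}=(x_1,\dots,x_n)$ be an i.i.d. sample from the density $$s_{f;G}(x;\mu,\sigma,\lambda)=\frac{2}{\sigma}f\left(\frac{x-\mu}{\sigma}\right)G\left(\lambda\,\omega\left(\frac{x-\mu}{\sigma}\right)\right),\quad x\in\mathbb{R},$$ with $\mu\in\mathbb{R}$, $\sigma>0$, $\lambda\in\mathbb{R}$, and consider the (improper) prior $\pi(\mu,\sigma,\lambda)=p(\lambda)/\sigma$ on $\mathbb{R}\times(0,\infty)\times\mathbb{R}$, where $p$ is a proper probability density on $\mathbb{R}$. Then the posterior distribution of $(\mu,\sigma,\lambda)$ is proper, i.e. $\int_{\mathbb{R}}\int_0^\infty\int_{\mathbb{R}}\prod_{j=1}^n s_{f;G}(x_j;\mu,\sigma,\lambda)\,\frac{p(\lambda)}{\sigma}\,d\mu\,d\sigma\,d\lambda<\infty$, provided $n\ge 2$ and all the observations $x_1,\dots,x_n$ are distinct.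
   Context: A density $f$ on $\mathbb{R}$ is a scale mixture of normals if $f(x)=\int_{(0,\infty)}\frac{1}{\tau}\phi\left(\frac{x}{\tau}\right)\,dH(\tau)$ for some probability distribution $H$ on $(0,\infty)$, where $\phi$ is the standard normal density (e.g. normal, logistic, Laplace, Student-$t$). *)

From HB Require Import structures.
From mathcomp Require Import all_boot all_order all_algebra.
From mathcomp Require Import all_classical all_reals all_analysis.
Set Implicit Arguments. Unset Strict Implicit. Unset Printing Implicit Defensive.
Import Order.TTheory GRing.Theory Num.Theory.
Import numFieldNormedType.Exports.
Local Open Scope classical_set_scope.
Local Open Scope ring_scope.

Definition std_normal_pdf {R : realType} (x : R) : R :=
  (Num.sqrt (2 * pi))^-1 * expR (- (x ^+ 2) / 2).

Definition scale_mixture_of_normals {R : realType} (f : R -> R) : Prop :=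
  exists H : probability R R,
    H `]-oo, 0%R]%classic = 0%E /\
    forall x : R,
      ((f x)%:E = \int[H]_(t in `]0%R, +oo[%classic) (t^-1 * std_normal_pdf (x / t))%:E)%E.

Definition prob_density {R : realType} (g : R -> R) : Prop :=
  measurable_fun setT g /\ (forall x, 0 <= g x) /\
  (\int[@lebesgue_measure R]_x (g x)%:E = 1)%E.

Definition abs_cont_cdf {R : realType} (G : R -> R) : Prop :=
  exists g : R -> R, prob_density g /\
    forall x : R, ((G x)%:E = \int[@lebesgue_measure R]_(t in `]-oo, x]%classic) (g t)%:E)%E.

Definition symmetric_cdf {R : realType} (G : R -> R) : Prop :=
  forall x : R, G (- x) = 1 - G x.

Definition skew_density {R : realType} (f G omega : R -> R)
    (mu sigma lambda x : R) : R :=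
  2 / sigma * f ((x - mu) / sigma) * G (lambda * omega ((x - mu) / sigma)).

From HB Require Import structures.
From mathcomp Require Import all_boot all_order all_algebra.
From mathcomp Require Import all_classical all_reals all_analysis.
From mathcomp Require Import ring lra measurable_realfun.
Import Order.TTheory GRing.Theory Num.Theory.
Import numFieldNormedType.Exports.
Local Open Scope classical_set_scope.
Local Open Scope ring_scope.

(* Since 0 <= G <= 1, the likelihood is at most (2/sigma)^n prod_j f((x_j - mu)/sigma).
   A scale mixture of normals is symmetric and unimodal.  The observations being
   2a-separated, for every mu all but one x_j are at distance >= a from mu, so
   prod_j f((x_j - mu)/sigma) <= f(a/sigma)^(n-1) sum_j f((x_j - mu)/sigma), whose
   mu-integral is n sigma f(a/sigma)^(n-1).  Unimodality also gives r f(r) <= 1, which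
   brings the sigma-integrand down to a multiple of sigma^-2 f(a/sigma), and the
   integral of the latter over (0, +oo) is a^-1 int_0^oo f.  Finally the prior p
   integrates to 1 in lambda. *)

Section nonneg_integral.
Local Open Scope ereal_scope.
Context d (T : measurableType d) (R : realType) (mu : {measure set T -> \bar R}).

(* No measurability is needed: the nonnegative integral is a supremum over the
   simple functions below the integrand. *)
Lemma ge0_subset_le_integral (A B : set T) (f g : T -> \bar R) :
  (forall x, A x -> 0 <= f x) -> (forall x, B x -> 0 <= g x) ->
  A `<=` B -> (forall x, A x -> f x <= g x) ->
  \int[mu]_(x in A) f x <= \int[mu]_(x in B) g x.
Proof.
move=> f0 g0 AB fg; rewrite !ge0_integralE//.
apply: ereal_sup_le => _ [h /= hf <-]; exists h => //= x.
apply: (le_trans (hf x)); rewrite /patch; case: ifPn => [/set_mem Ax|_].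
  by rewrite mem_set ?fg //; exact: AB.
by case: ifPn => // /set_mem; exact: g0.
Qed.

Lemma ge0_integral_le_nneseries (D : set T) (h : T -> \bar R) (g : nat -> T -> \bar R) :
  (forall k, measurable_fun [set: T] (g k)) -> (forall k x, 0 <= g k x) ->
  (forall x, D x -> 0 <= h x) -> (forall x, D x -> h x <= \sum_(k <oo) g k x) ->
  \int[mu]_(x in D) h x <= \sum_(k <oo) \int[mu]_x g k x.
Proof.
move=> mg g0 h0 hg; rewrite -integral_nneseries //.
apply: ge0_subset_le_integral => // x _; exact: nneseries_ge0.
Qed.

End nonneg_integral.

Section affine_change_of_variables.
Context {R : realType}.
Local Notation mu := (@lebesgue_measure R).

Lemma measurable_fun_affine (c s : R) : measurable_fun setT (fun m : R => (c - m) / s).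
Proof. by apply: measurable_funM => //; apply: measurable_funB. Qed.

Lemma preimage_affine_itv (c s a b : R) : 0 < s ->
  (fun m => (c - m) / s) @^-1` `]a, b]%classic = `[c - s * b, c - s * a[%classic.
Proof.
move=> s0; apply/seteqP; split => m /=; rewrite !in_itv /= ltr_pdivlMr // ler_pdivrMr //;
  by move=> /andP[? ?]; apply/andP; split; lra.
Qed.

Lemma ge0_integral_comp_affine (F : R -> R) (c s : R) : 0 < s ->
  measurable_fun setT F -> (forall u, 0 <= F u) ->
  (\int[mu]_m (F ((c - m) / s))%:E = s%:E * \int[mu]_u (F u)%:E)%E.
Proof.
move=> s0 mF F0.
pose phi := fun m : R => (c - m) / s.
have s'0 : 0 <= s^-1 by rewrite invr_ge0 ltW.
(* The measure instance of a pushforward depends on the measurability proof, so it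
   has to be named explicitly. *)
pose P := measure_function_pushforward__canonical__measure_function_Measure mu
  (measurable_fun_affine c s : @measurable_fun _ _ (measurableTypeR R) (measurableTypeR R) _ _).
pose nu := mscale (NngNum s'0) P.
have mu_nu : forall A, measurable A -> mu A = nu A.
  apply: (@lebesgue_measure_unique R nu) => _ [[a b]] _ <-.
  change (mu `]a, b]%classic = (s^-1)%:E * mu (phi @^-1` `]a, b]%classic))%E.
  rewrite preimage_affine_itv //.
  rewrite !lebesgue_measure_itv /= !lte_fin ltrD2l ltrN2 ltr_pM2l //.
  case: ifPn => ab; last by rewrite mule0.
  by rewrite -!EFinD -EFinM; congr (_%:E); field; rewrite gt_eqF.
have mFe : measurable_fun setT (fun u => (F u)%:E) by exact/measurable_EFinP.
rewrite [in RHS](eq_measure_integral nu) => [|A mA _]; last exact: mu_nu.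
rewrite ge0_integral_mscale //; last by move=> u _; rewrite lee_fin.
rewrite ge0_integral_pushforward //; last 2 first.
- exact: measurable_fun_affine.
- by move=> u _; rewrite lee_fin.
by rewrite preimage_setT muleA -EFinM mulfV ?gt_eqF // mul1e.
Qed.

End affine_change_of_variables.

Definition radially_nonincreasing {R : realType} (f : R -> R) : Prop :=
  forall r u : R, 0 <= r -> r <= `|u| -> f u <= f r.

Section radial_densities.
Context {R : realType}.
Local Notation mu := (@lebesgue_measure R).

Lemma std_normal_pdf_ge0 (u : R) : 0 <= std_normal_pdf u.
Proof. by rewrite mulr_ge0 ?invr_ge0 ?sqrtr_ge0 ?expR_ge0. Qed.

Lemma std_normal_pdf_radially_nonincreasing : radially_nonincreasing (@std_normal_pdf R).
Proof.
move=> r u r0 ru; rewrite ler_wpM2l ?invr_ge0 ?sqrtr_ge0 // ler_expR !mulNr lerN2.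
rewrite ler_wpM2r ?invr_ge0 // -(real_normK (num_real u)).
by rewrite lerXn2r ?nnegrE // (le_trans r0).
Qed.

Lemma scale_mixture_radially_nonincreasing {f : R -> R} :
  scale_mixture_of_normals f -> radially_nonincreasing f.
Proof.
move=> [H [_ Hf]] r u r0 ru; rewrite -lee_fin !Hf.
have kernel_ge0 (v t : R) : `]0, +oo[%classic t -> (0 <= (t^-1 * std_normal_pdf (v / t))%:E)%E.
  rewrite /= in_itv /= andbT => t0.
  by rewrite lee_fin mulr_ge0 ?std_normal_pdf_ge0 // invr_ge0 ltW.
apply: ge0_subset_le_integral; [exact: kernel_ge0|exact: kernel_ge0|by []|].
move=> t; rewrite /= in_itv /= andbT => t0.
rewrite lee_fin; apply: ler_wpM2l; first by rewrite invr_ge0 ltW.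
apply: std_normal_pdf_radially_nonincreasing; first by rewrite divr_ge0 // ltW.
by rewrite normrM [`|t^-1|]gtr0_norm ?ler_pM2r ?invr_gt0.
Qed.

Lemma radially_nonincreasing_le_integral (f : R -> R) (a b : R) :
  radially_nonincreasing f -> (forall u, 0 <= f u) -> 0 <= a <= b ->
  (((b - a) * f b)%:E <= \int[mu]_(u in `[a, b[) (f u)%:E)%E.
Proof.
move=> fmono f0 /andP[a0 ab].
have -> : ((b - a) * f b)%:E = (\int[mu]_(u in `[a, b[) (cst (f b)%:E) u)%E.
  rewrite integral_cst //= lebesgue_measure_itv /= lte_fin.
  case: ltP => [_|ba]; first by rewrite -EFinD -EFinM mulrC.
  have -> : b = a by apply/le_anti; rewrite ab ba.
  by rewrite subrr mul0r mule0.
apply: ge0_subset_le_integral => // u; rewrite /= in_itv /= => /andP[au ub]; rewrite lee_fin //.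
by rewrite fmono ?(le_trans a0) // ger0_norm ?(le_trans a0) // ltW.
Qed.

Lemma prob_density_radial_mul_le1 (f : R -> R) (r : R) :
  prob_density f -> radially_nonincreasing f -> 0 <= r -> r * f r <= 1.
Proof.
move=> [mf [f0 f1]] fmono r0; rewrite -lee_fin -f1.
have := @radially_nonincreasing_le_integral f 0 r fmono f0.
rewrite lexx r0 subr0 => /(_ isT) /le_trans; apply.
by apply: ge0_subset_le_integral => // u _; rewrite lee_fin.
Qed.

Lemma abs_cont_cdf_ge0_le1 {G : R -> R} (x : R) : abs_cont_cdf G -> 0 <= G x <= 1.
Proof.
move=> [g [[mg [g0 g1]] Gx]].
have mge : measurable_fun setT (fun t => (g t)%:E) by exact/measurable_EFinP.
rewrite -!lee_fin Gx integral_ge0 /= => [|t _]; last by rewrite lee_fin.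
rewrite -g1 ge0_subset_integral // => t _; by rewrite lee_fin.
Qed.

End radial_densities.

Lemma exists_nat_itv {R : archiRealFieldType} (x : R) : 1 <= x ->
  exists k : nat, k.+1%:R <= x < k.+2%:R.
Proof.
move=> x1; have x0 : 0 <= x by exact: le_trans x1.
have := truncn_itv x0; have : (0 < Num.truncn x)%N by rewrite truncn_gt0.
by case: (Num.truncn x) => // k _; exists k.
Qed.

Lemma nneseries_telescope_inv {R : realType} :
  (\sum_(k <oo) ((k.+1%:R : R)^-1 - (k.+2%:R)^-1)%:E = 1)%E.
Proof.
pose g k : R := - (k.+1%:R)^-1.
have g0 : g @ \oo --> 0 by rewrite -oppr0; apply: cvgN; exact: cvg_harmonic.
have := @nondecreasing_telescope_sumey R 0 g.
rewrite EFin_lim; last by apply/cvg_ex; exists 0.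
rewrite (cvg_lim _ g0) // sub0e /g -EFinN opprK invr1 => <- //.
  by apply: eq_eseriesr => k _; rewrite -EFinB opprK addrC.
by move=> m n mn; rewrite lerN2 lef_pV2 ?posrE ?ltr0n // ler_nat ltnS.
Qed.

Lemma trivIset_nat_itv {R : realType} :
  trivIset setT (fun k : nat => `[(k%:R : R), k.+1%:R[%classic).
Proof.
move=> i j _ _ [u [/= + +]]; rewrite !in_itv /= => /andP[iu ui] /andP[ju uj].
apply/eqP; rewrite eqn_leq -ltnS -(ltr_nat R) (le_lt_trans iu uj) /=.
by rewrite -ltnS -(ltr_nat R) (le_lt_trans ju ui).
Qed.

Lemma nneseries_radial_density_le1 {R : realType} (f : R -> R) :
  prob_density f -> radially_nonincreasing f -> (\sum_(k <oo) (f k.+1%:R)%:E <= 1)%E.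
Proof.
move=> [mf [f0 f1]] fmono; pose U k := `[(k%:R : R), k.+1%:R[%classic.
apply: (@le_trans _ _ (\sum_(k <oo) \int[lebesgue_measure]_(u in U k) (f u)%:E)%E).
  apply: lee_nneseries => [k _ _|k _]; first by rewrite lee_fin.
  have := @radially_nonincreasing_le_integral R f k%:R k.+1%:R fmono f0.
  by rewrite ler_nat leqnSn ler0n -natrB // subSnn mul1r => /(_ isT).
rewrite -ge0_integral_bigcup //; last exact: trivIset_nat_itv.
- by rewrite -f1; apply: ge0_subset_le_integral => // u _; rewrite lee_fin.
- by move=> k; exact: measurable_itv.
- by apply/measurable_EFinP; exact: measurable_funTS.
- by move=> u _; rewrite lee_fin.
Qed.

Lemma staircase_mass_le {R : realFieldType} (a c F0 FK K : R) :
  0 < a -> 0 <= c -> 0 <= F0 -> 0 <= FK -> 1 <= K ->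
  c * (((K + 1) / a) ^+ 2 * FK) * (a / K - a / (K + 1))
    + c * (F0 / (a * K) ^+ 2) * (a * (K + 1) - a * K)
  <= c * (2 / a) * (FK + F0 * (K^-1 - (K + 1)^-1)).
Proof.
move=> a0 c0 F00 FK0 K1; have K0 : 0 < K by exact: lt_le_trans K1.
rewrite -subr_ge0.
have -> : c * (2 / a) * (FK + F0 * (K^-1 - (K + 1)^-1))
    - (c * (((K + 1) / a) ^+ 2 * FK) * (a / K - a / (K + 1))
       + c * (F0 / (a * K) ^+ 2) * (a * (K + 1) - a * K))
    = c * (K - 1) / a * (FK / K + F0 / (K ^+ 2 * (K + 1))).
  by field; rewrite !gt_eqF ?addr_gt0.
apply: mulr_ge0; first by rewrite divr_ge0 ?mulr_ge0 ?subr_ge0 // ltW.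
by rewrite addr_ge0 ?divr_ge0 ?mulr_ge0 ?exprn_ge0 ?addr_ge0 // ltW.
Qed.

Section inverse_scaling.
Context {R : realType} (f : R -> R) (a : R).
Hypotheses (fdens : prob_density f) (fmono : radially_nonincreasing f) (a0 : 0 < a).
Let f0 : forall u, 0 <= f u := fdens.2.1.
Local Notation mu := (@lebesgue_measure R).

(* Substituting t = a / s would turn the integral of s^-2 f (a / s) over (0, +oo)
   into a^-1 times that of f, but f need not be continuous.  Instead, (0, +oo) is
   cut into the intervals I k, where a / s lies in [k + 1, k + 2), and J k, where
   s / a does, and the integrand is bounded by a constant on each piece. *)
Let I k := `]a / k.+2%:R, a / k.+1%:R]%classic : set R.
Let J k := `[a * k.+1%:R, a * k.+2%:R[%classic : set R.
Let d k := (k.+2%:R / a) ^+ 2 * f k.+1%:R.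
Let e k := f 0 / (a * k.+1%:R) ^+ 2.

Let d_ge0 k : 0 <= d k.
Proof. by rewrite mulr_ge0 ?exprn_ge0 ?divr_ge0 // ltW. Qed.

Let e_ge0 k : 0 <= e k.
Proof. by rewrite divr_ge0 ?exprn_ge0 // mulr_ge0 // ltW. Qed.

Lemma inv_sqr_comp_le_staircase (s : R) : 0 < s ->
  exists k, s ^- 2 * f (a / s) <= d k * \1_(I k) s + e k * \1_(J k) s.
Proof.
move=> s0; have s'0 : 0 <= s^-1 by rewrite invr_ge0 ltW.
have [s_lt_a|a_le_s] := ltP s a.
  have [k /andP[k1 k2]] : exists k : nat, k.+1%:R <= a / s < k.+2%:R.
    by apply: exists_nat_itv; rewrite ler_pdivlMr // mul1r ltW.
  exists k; rewrite indicE mem_set; last first.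
    rewrite /I /= in_itv /= ltr_pdivrMr ?ltr0n // ler_pdivlMr ?ltr0n // !(mulrC s).
    by rewrite -ltr_pdivrMr // -ler_pdivlMr // k1 k2.
  rewrite mulr1; apply: (@le_trans _ _ (d k)); last by rewrite lerDl mulr_ge0.
  rewrite -exprVn; apply: ler_pM; rewrite ?exprn_ge0 //.
    by rewrite lerXn2r ?nnegrE ?divr_ge0 ?(ltW a0) // ler_pdivlMr // mulrC ltW.
  by rewrite fmono // ger0_norm // divr_ge0 // ltW.
have [k /andP[k1 k2]] : exists k : nat, k.+1%:R <= s / a < k.+2%:R.
  by apply: exists_nat_itv; rewrite ler_pdivlMr // mul1r.
exists k; rewrite [\1_(J k) s]indicE mem_set; last first.
  by rewrite /J /= in_itv /= !(mulrC a) -ler_pdivlMr // -ltr_pdivrMr // k1 k2.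
rewrite mulr1; apply: (@le_trans _ _ (e k)); last by rewrite lerDr mulr_ge0.
rewrite mulrC /e.
apply: ler_pM => //; first by rewrite invr_ge0 exprn_ge0 // ltW.
  by apply: fmono.
rewrite lef_pV2 ?posrE ?exprn_gt0 ?mulr_gt0 // lerXn2r ?nnegrE ?mulr_ge0 ?(ltW a0) ?(ltW s0) //.
by rewrite mulrC -ler_pdivlMr.
Qed.

Lemma integral_staircase_le (c : R) (k : nat) : 0 <= c ->
  (\int[mu]_s (c * (d k * \1_(I k) s + e k * \1_(J k) s))%:E
    <= (c * (2 / a) * (f k.+1%:R + f 0 * (k.+1%:R^-1 - k.+2%:R^-1)))%:E)%E.
Proof.
move=> c0.
have cd0 : 0 <= c * d k by rewrite mulr_ge0.
have ce0 : 0 <= c * e k by rewrite mulr_ge0.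
have mI : measurable (I k) by exact: measurable_itv.
have mJ : measurable (J k) by exact: measurable_itv.
under eq_integral do
  rewrite mulrDr (mulrA c (d k)) (mulrA c (e k)) EFinD (EFinM (c * d k)) (EFinM (c * e k)).
rewrite ge0_integralD //; last 4 first.
- by move=> s _; rewrite -EFinM lee_fin indicE mulr_ge0.
- by apply: measurable_funeM; apply/measurable_EFinP; exact: measurable_indic.
- by move=> s _; rewrite -EFinM lee_fin indicE mulr_ge0.
- by apply: measurable_funeM; apply/measurable_EFinP; exact: measurable_indic.
rewrite !ge0_integralZl_EFin //; last 2 first.
- by apply/measurable_EFinP; exact: measurable_indic.
- by apply/measurable_EFinP; exact: measurable_indic.
rewrite !integral_indic // !setIT /I /J /= !lebesgue_measure_itv /= !lte_fin.
rewrite ifT; last by rewrite ltr_pM2l // ltf_pV2 ?posrE ?ltr0n // ltr_nat.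
rewrite ifT; last by rewrite ltr_pM2l // ltr_nat.
rewrite -!EFinD lee_fin -[k.+2%:R]natr1 /d /e -[k.+2%:R]natr1.
by apply: staircase_mass_le; rewrite ?ler1n.
Qed.

Lemma nneseries_staircase_mass_le (C : R) : 0 <= C ->
  (\sum_(k <oo) (C * (f k.+1%:R + f 0 * (k.+1%:R^-1 - k.+2%:R^-1)))%:E
    <= (C * (1 + f 0))%:E)%E.
Proof.
move=> C0; have t0 k : 0 <= k.+1%:R^-1 - k.+2%:R^-1 :> R.
  by rewrite subr_ge0 lef_pV2 ?posrE ?ltr0n // ler_nat.
rewrite (eq_eseriesr (fun k _ => EFinM _ _)) nneseriesZl => [|k _]; last first.
  by rewrite lee_fin addr_ge0 // mulr_ge0.
rewrite [leRHS]EFinM; apply: lee_wpmul2l; first by rewrite lee_fin.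
under eq_eseriesr do rewrite EFinD EFinM.
rewrite nneseriesD => [|k _ _|k _ _]; last 2 first.
- by rewrite lee_fin.
- by rewrite lee_fin mulr_ge0.
rewrite nneseriesZl => [|k _]; last by rewrite lee_fin.
rewrite nneseries_telescope_inv mule1 EFinD leeD2r //.
exact: nneseries_radial_density_le1.
Qed.

Lemma integral_inv_sqr_comp_le (c : R) : 0 <= c ->
  (\int[mu]_(s in `]0%R, +oo[) (c * (s ^- 2 * f (a / s)))%:E
    <= (c * (2 / a) * (1 + f 0))%:E)%E.
Proof.
move=> c0; pose g k s := (c * (d k * \1_(I k) s + e k * \1_(J k) s))%:E.
have g0 k s : (0 <= g k s)%E.
  by rewrite lee_fin mulr_ge0 // addr_ge0 // mulr_ge0 // indicE.
apply: le_trans (@ge0_integral_le_nneseries _ _ _ mu _ _ g _ g0 _ _) _.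
- move=> k; apply/measurable_EFinP; apply: measurable_funM => //.
  by apply: measurable_funD; apply: measurable_funM => //; apply: measurable_indic;
    exact: measurable_itv.
- move=> s; rewrite /= in_itv /= andbT => s0.
  by rewrite lee_fin mulr_ge0 // mulr_ge0 ?f0 // invr_ge0 exprn_ge0 // ltW.
- move=> s; rewrite /= in_itv /= andbT => s0.
  have [k hk] := inv_sqr_comp_le_staircase s s0.
  rewrite (@nneseriesD1 _ _ k) //; apply: le_trans (leeDl _ (nneseries_ge0 _)) => //.
  by rewrite lee_fin ler_wpM2l.
apply: le_trans (lee_nneseries _ (fun k _ => integral_staircase_le c k c0)) _.
  by move=> k _ _; apply: integral_ge0 => s _; exact: g0.
by apply: nneseries_staircase_mass_le; rewrite mulr_ge0 // divr_ge0 // ltW.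
Qed.

End inverse_scaling.

Lemma prodr_le_exp_sum {R : realDomainType} {n : nat} (k : 'I_n) (g : 'I_n -> R) (B : R) :
  (forall j, 0 <= g j) -> (forall j, j != k -> g j <= B) ->
  \prod_j g j <= B ^+ n.-1 * \sum_j g j.
Proof.
move=> g0 gB; rewrite (bigD1 k) //= mulrC.
apply: ler_pM; [exact: prodr_ge0|exact: g0| |].
  have -> : B ^+ n.-1 = \prod_(j | j != k) B by rewrite prodr_const cardC1 card_ord.
  by apply: ler_prod => j jk; rewrite g0 gB.
by rewrite (bigD1 k) //= lerDl sumr_ge0.
Qed.

Section separated_points.
Context {R : realType} {n : nat} (x : 'I_n -> R).

Lemma injective_separated : injective x ->
  exists2 a : R, 0 < a & forall i j, i != j -> 2 * a <= `|x i - x j|.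
Proof.
move=> xinj.
pose m := \big[Order.min/1]_(ij : 'I_n * 'I_n | ij.1 != ij.2) `|x ij.1 - x ij.2|.
have m0 : 0 < m.
  apply: lt_bigmin => // ij ij12; rewrite normr_gt0 subr_eq0.
  by apply: contra ij12 => /eqP /xinj ->.
exists (m / 2) => [|i j ij]; first by rewrite divr_gt0.
rewrite mulrC divfK ?pnatr_eq0 //.
exact: (@bigmin_le_cond _ _ _ _ (i, j) (fun ij : 'I_n * 'I_n => ij.1 != ij.2)
  (fun ij => `|x ij.1 - x ij.2|)).
Qed.

Lemma separated_far_but_one (a mu : R) : (0 < n)%N ->
  (forall i j, i != j -> 2 * a <= `|x i - x j|) ->
  exists k : 'I_n, forall j, j != k -> a <= `|x j - mu|.
Proof.
move=> n0 xsep; have [[k xk]|far] := pselect (exists k, `|x k - mu| < a).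
  exists k => j jk; rewrite leNgt; apply/negP => xj.
  have := xsep j k jk; have := ler_distD mu (x j) (x k).
  rewrite [`|mu - _|]distrC; lra.
exists (Ordinal n0) => j _; rewrite leNgt; apply/negP => xj; apply: far; by exists j.
Qed.

End separated_points.

Lemma likelihood_bound_algebra {R : realFieldType} (n : nat) (a s F P : R) :
  (1 < n)%N -> 0 < a -> 0 < s -> 0 <= F -> 0 <= P -> a / s * F <= 1 ->
  (2 / s) ^+ n * F ^+ n.-1 * (P / s) * (n%:R * s)
    <= P * (2 ^+ n * n%:R * a^-1 ^+ n.-2) * (s ^- 2 * F).
Proof.
case: n => [|[|m]] // _ a0 s0 F0 P0 aF1.
have common_ge0 : 0 <= P * 2 ^+ m.+2 * m.+2%:R * (s ^- 2 * F).
  have s2 : 0 <= s ^- 2 by rewrite invr_ge0 exprn_ge0 // ltW.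
  by apply: mulr_ge0; [do 2 apply: mulr_ge0 => //; exact: exprn_ge0|exact: mulr_ge0].
change ((2 / s) ^+ m.+2 * F ^+ m.+1 * (P / s) * (m.+2%:R * s)
    <= P * (2 ^+ m.+2 * m.+2%:R * a^-1 ^+ m) * (s ^- 2 * F)).
have -> : (2 / s) ^+ m.+2 * F ^+ m.+1 * (P / s) * (m.+2%:R * s)
    = P * 2 ^+ m.+2 * m.+2%:R * (s ^- 2 * F) * (F / s) ^+ m.
  by rewrite !exprMn !exprS !exprVn; field; rewrite expf_neq0 ?gt_eqF.
have -> : P * (2 ^+ m.+2 * m.+2%:R * a^-1 ^+ m) * (s ^- 2 * F)
    = P * 2 ^+ m.+2 * m.+2%:R * (s ^- 2 * F) * a^-1 ^+ m by ring.
rewrite ler_wpM2l //; apply: lerXn2r; rewrite ?nnegrE ?divr_ge0 ?invr_ge0 ?(ltW s0) ?(ltW a0) //.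
by rewrite -(ler_pM2l a0) mulfV ?gt_eqF // mulrCA mulrC.
Qed.

Section skew_likelihood.
Context {R : realType} (f G omega : R -> R).
Hypotheses (fdens : prob_density f) (fmono : radially_nonincreasing f).
Hypothesis Gcdf : abs_cont_cdf G.
Let f0 : forall u, 0 <= f u := fdens.2.1.

Lemma skew_density_ge0 (mu s lambda y : R) : 0 < s ->
  0 <= skew_density f G omega mu s lambda y.
Proof.
move=> s0; have /andP[G0 _] := abs_cont_cdf_ge0_le1 (lambda * omega ((y - mu) / s)) Gcdf.
by rewrite /skew_density !mulr_ge0 // invr_ge0 ltW.
Qed.

Lemma skew_density_le (mu s lambda y : R) : 0 < s ->
  skew_density f G omega mu s lambda y <= 2 / s * f ((y - mu) / s).
Proof.
move=> s0; have /andP[_ G1] := abs_cont_cdf_ge0_le1 (lambda * omega ((y - mu) / s)) Gcdf.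
by rewrite /skew_density ler_piMr // mulr_ge0 // divr_ge0 // ltW.
Qed.

Lemma skew_likelihood_ge0 (n : nat) (x : 'I_n -> R) (mu s lambda : R) : 0 < s ->
  0 <= \prod_j skew_density f G omega mu s lambda (x j).
Proof. by move=> s0; rewrite prodr_ge0 // => j _; exact: skew_density_ge0. Qed.

Lemma skew_posterior_ge0 (n : nat) (x : 'I_n -> R) (mu s lambda P : R) :
  0 < s -> 0 <= P ->
  0 <= (\prod_j skew_density f G omega mu s lambda (x j)) * (P / s).
Proof. by move=> s0 P0; rewrite mulr_ge0 ?skew_likelihood_ge0 // divr_ge0 // ltW. Qed.

Lemma skew_likelihood_le (n : nat) (x : 'I_n -> R) (a mu s lambda : R) :
  (0 < n)%N -> 0 <= a -> 0 < s -> (forall i j, i != j -> 2 * a <= `|x i - x j|) ->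
  \prod_j skew_density f G omega mu s lambda (x j)
    <= (2 / s) ^+ n * (f (a / s) ^+ n.-1 * \sum_j f ((x j - mu) / s)).
Proof.
move=> n0 a0 s0 xsep; have [k xk] := separated_far_but_one x a mu n0 xsep.
apply: (@le_trans _ _ (\prod_j (2 / s * f ((x j - mu) / s)))).
  by apply: ler_prod => j _; rewrite skew_density_ge0 ?skew_density_le.
rewrite big_split prodr_const card_ord /=.
apply: ler_wpM2l; first by rewrite exprn_ge0 // divr_ge0 // ltW.
apply: (prodr_le_exp_sum k) => // j jk; apply: fmono; first by rewrite divr_ge0 // ltW.
by rewrite normrM [`|s^-1|]gtr0_norm ?invr_gt0 // ler_pM2r ?invr_gt0 // xk.
Qed.

Lemma integral_skew_likelihood_le (n : nat) (x : 'I_n -> R) (a s lambda P : R) :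
  (1 < n)%N -> 0 < a -> 0 < s -> 0 <= P ->
  (forall i j, i != j -> 2 * a <= `|x i - x j|) ->
  (\int[lebesgue_measure]_mu
      ((\prod_j skew_density f G omega mu s lambda (x j)) * (P / s))%:E
    <= (P * (2 ^+ n * n%:R * a^-1 ^+ n.-2) * (s ^- 2 * f (a / s)))%:E)%E.
Proof.
move=> n1 a0 s0 P0 xsep; have [mf [_ f1]] := fdens.
have Ps0 : 0 <= P / s by rewrite divr_ge0 // ltW.
set B := (2 / s) ^+ n * f (a / s) ^+ n.-1 * (P / s).
have B0 : 0 <= B.
  by apply: mulr_ge0 => //; apply: mulr_ge0; apply: exprn_ge0; rewrite // divr_ge0 // ltW.
have mfj (j : 'I_n) : measurable_fun setT (fun m : R => f ((x j - m) / s)).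
  exact: measurableT_comp mf (measurable_fun_affine _ _).
apply: (@le_trans _ _
    (\int[lebesgue_measure]_m (B%:E * (\sum_j f ((x j - m) / s))%:E))%E).
  apply: ge0_subset_le_integral => // m _ /=.
  - by rewrite lee_fin skew_posterior_ge0.
  - by rewrite -EFinM lee_fin mulr_ge0 // sumr_ge0.
  - rewrite -EFinM lee_fin /B [leRHS]mulrAC; apply: ler_wpM2r => //.
    by rewrite -mulrA skew_likelihood_le // ?(ltW a0) // (ltn_trans _ n1).
rewrite ge0_integralZl_EFin //; last 2 first.
- by move=> m _; rewrite lee_fin sumr_ge0.
- by apply/measurable_EFinP; exact: measurable_sum.
under eq_integral do rewrite -sumEFin.
rewrite ge0_integral_sum //; last 2 first.
- by move=> j; apply/measurable_EFinP; exact: mfj.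
- by move=> j m _; rewrite lee_fin.
under eq_bigr do rewrite ge0_integral_comp_affine // f1 mule1.
rewrite sumEFin sumr_const card_ord -EFinM lee_fin -[s *+ n]mulr_natl /B.
apply: likelihood_bound_algebra => //.
exact: prob_density_radial_mul_le1 (divr_ge0 (ltW a0) (ltW s0)).
Qed.

Lemma integral_skew_posterior_le (n : nat) (x : 'I_n -> R) (a lambda P : R) :
  (1 < n)%N -> 0 < a -> 0 <= P ->
  (forall i j, i != j -> 2 * a <= `|x i - x j|) ->
  (\int[lebesgue_measure]_(s in `]0%R, +oo[) \int[lebesgue_measure]_mu
      ((\prod_j skew_density f G omega mu s lambda (x j)) * (P / s))%:E
    <= (P * (2 ^+ n * n%:R * a^-1 ^+ n.-2 * (2 / a) * (1 + f 0)))%:E)%E.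
Proof.
move=> n1 a0 P0 xsep; set c := P * (2 ^+ n * n%:R * a^-1 ^+ n.-2).
have c0 : 0 <= c by rewrite mulr_ge0 // mulr_ge0 // exprn_ge0 // invr_ge0 ltW.
apply: (@le_trans _ _
    (\int[lebesgue_measure]_(s in `]0%R, +oo[) (c * (s ^- 2 * f (a / s)))%:E)%E).
  apply: ge0_subset_le_integral => // s; rewrite /= in_itv /= andbT => s0.
  - by apply: integral_ge0 => m _; rewrite lee_fin skew_posterior_ge0.
  - by rewrite lee_fin mulr_ge0 // mulr_ge0 // invr_ge0 exprn_ge0 // ltW.
  - exact: integral_skew_likelihood_le.
have -> : P * (2 ^+ n * n%:R * a^-1 ^+ n.-2 * (2 / a) * (1 + f 0))
    = c * (2 / a) * (1 + f 0) by rewrite /c !mulrA.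
exact: integral_inv_sqr_comp_le.
Qed.

End skew_likelihood.

Theorem theorem2 (R : realType) (f G omega p : R -> R) (n : nat) (x : 'I_n -> R) :
  scale_mixture_of_normals f ->
  prob_density f ->
  abs_cont_cdf G -> symmetric_cdf G ->
  measurable_fun setT omega ->
  (forall y : R, omega (- y) = - omega y) ->
  (forall y : R, 0 < y -> 0 < omega y) ->
  prob_density p ->
  (2 <= n)%N ->
  injective x ->
  (\int[@lebesgue_measure R]_lambda
     \int[@lebesgue_measure R]_(sigma in `]0%R, +oo[%classic)
       \int[@lebesgue_measure R]_mu
         ((\prod_(j < n) skew_density f G omega mu sigma lambda (x j))
            * (p lambda / sigma))%:E < +oo)%E.
Proof.
move=> fmix fdens Gcdf _ _ _ _ [mp [p0 p1]] n2 xinj.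
have fmono := scale_mixture_radially_nonincreasing fmix.
have [a a0 xsep] := injective_separated x xinj.
set K := 2 ^+ n * n%:R * a^-1 ^+ n.-2 * (2 / a) * (1 + f 0).
have K0 : 0 <= K.
  apply: mulr_ge0; last by rewrite addr_ge0 // fdens.2.1.
  apply: mulr_ge0; last by rewrite divr_ge0 // ltW.
  by rewrite mulr_ge0 // exprn_ge0 // invr_ge0 ltW.
apply: (@le_lt_trans _ _ (\int[lebesgue_measure]_lambda (p lambda * K)%:E)%E).
  apply: ge0_subset_le_integral => // lambda _; last first.
  - exact: integral_skew_posterior_le.
  - by rewrite lee_fin mulr_ge0.
  apply: integral_ge0 => s; rewrite /= in_itv /= andbT => s0.
  by apply: integral_ge0 => m _; rewrite lee_fin skew_posterior_ge0.
under eq_integral do rewrite mulrC EFinM.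
rewrite ge0_integralZl_EFin // => [|l _|]; last 2 first.
- by rewrite lee_fin.
- exact/measurable_EFinP.
by rewrite p1 mule1 ltry.
Qed.
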